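(* Let $L$ be an $\omega$-regular language and let $\mathcal{F}=(M,\{A^u\})$ be the periodic (respectively syntactic, recurrent) FDFA of $L$. Define $UP_{\mathrm{orig}}(\mathcal{F})$ as the set of words $uv^\omega$ ($u\in\Sigma^*$, $v\in\Sigma^+$) such that: in the periodic case, $v\in L(A^{M(u)})$; in the syntactic and recurrent cases, $M(uv)=M(u)$ and $v\in L(A^{M(u)})$. Then $UP_{\mathrm{orig}}(\mathcal{F})=UP(\mathcal{F})$.
   Context: For a complete DFA $A$ and finite word $w$, $A(w)$ is the state reached from the initial state on $w$. An FDFA is $\mathcal{F}=(M,\{A^q\}_{q\in Q})$ with $M$ a complete DFA without accepting states and each $A^q$ a complete DFA; $(u,v)$ is accepted by $\mathcal{F}$ iff $M(uv)=M(u)$ and $v\in L(A^{M(u)})$, and $UP(\mathcal{F})=\{uv^\omega: v\in\Sigma^+,\ (u,v)\text{ accepted}\}$. Canonical FDFAs of an $\omega$-regular $L$: $x\sim_L y$ iff $\forall w\in\Sigma^\omega$, $xw\in L\Leftrightarrow yw\in L$. The leading automaton has states the classes of $\sim_L$, initial state $[\epsilon]$, transitions $[x]\xrightarrow{a}[xa]$. For each state with representative $u$: $x\approx^u_P y$ iff $\forall v\in\Sigma^*$: $u(xv)^\omega\in L\Leftrightarrow u(yv)^\omega\in L$; $x\approx^u_S y$ iff $ux\sim_L uy$ and $\forall v$: $uxv\sim_L u\Rightarrow(u(xv)^\omega\in L\Leftrightarrow u(yv)^\omega\in L)$; $x\approx^u_R y$ iff $\forall v$: $(uxv\sim_L u\wedge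 u(xv)^\omega\in L)\Leftrightarrow(uyv\sim_L u\wedge u(yv)^\omega\in L)$. For $K\in\{P,S,R\}$ the progress automaton $A^u$ has states the classes of $\approx^u_K$, initial state $[\epsilon]$, transitions $[x]\xrightarrow{a}[xa]$, and accepting states the classes $[v]$ with $uv^\omega\in L$ ($K=P$), resp. with $uv\sim_L u$ and $uv^\omega\in L$ ($K\in\{S,R\}$). These are the periodic, syntactic and recurrent FDFAs of $L$. *)

From Stdlib Require Import ClassicalEpsilon.
From mathcomp Require Import all_boot.

Set Implicit Arguments.
Unset Strict Implicit.
Unset Printing Implicit Defensive.

Section Words.
Variable S : finType.

Fixpoint prepend (u : seq S) (w : nat -> S) : nat -> S :=
  match u with
  | [::] => w
  | a :: u' => fun n => match n with 0 => a | n'.+1 => prepend u' w n' end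
  end.

(** [opow a v'] is the omega-word (a :: v')^omega (nonempty period). *)
Definition opow (a : S) (v' : seq S) : nat -> S :=
  fun n => nth a (a :: v') (n %% (size v').+1).

Record NBA := {
  nba_state : finType;
  nba_init : pred nba_state;
  nba_trans : nba_state -> S -> nba_state -> bool;
  nba_final : pred nba_state }.

Definition nba_accepts (A : NBA) (w : nat -> S) : Prop :=
  exists r : nat -> nba_state A,
    nba_init (r 0) /\ (forall n, nba_trans (r n) (w n) (r n.+1)) /\
    (forall N, exists2 n, N <= n & nba_final (r n)).

Definition omega_regular (L : (nat -> S) -> Prop) : Prop :=
  exists A : NBA, forall w, L w <-> nba_accepts A w.

Record DFA := {
  dstate : Type;
  dinit : dstate;
  dstep : dstate -> S -> dstate;
  dacc : dstate -> Prop }.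

Definition drun (A : DFA) (w : seq S) : dstate A := foldl (@dstep A) (dinit A) w.
Definition dlang (A : DFA) (w : seq S) : Prop := dacc (drun A w).

(** FDFAs: a leading DFA (its acceptance component is unused / empty)
    and a progress DFA for each of its states. *)
Record FDFA := {
  lead : DFA;
  prog : dstate lead -> DFA }.

Definition fdfa_accepts (F : FDFA) (u v : seq S) : Prop :=
  drun (lead F) (u ++ v) = drun (lead F) u /\ dlang (@prog F (drun (lead F) u)) v.

Definition UP (F : FDFA) (w : nat -> S) : Prop :=
  exists (u : seq S) (a : S) (v' : seq S),
    fdfa_accepts F u (a :: v') /\ forall n, w n = prepend u (opow a v') n.

Inductive fdfa_kind := Periodic | Syntactic | Recurrent.

Definition UP_orig (K : fdfa_kind) (F : FDFA) (w : nat -> S) : Prop :=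
  exists (u : seq S) (a : S) (v' : seq S),
    (match K with
     | Periodic => dlang (@prog F (drun (lead F) u)) (a :: v')
     | _ => fdfa_accepts F u (a :: v')
     end) /\ forall n, w n = prepend u (opow a v') n.

(** Quotients by a relation: classes are the predicates [R x]. *)
Definition qclass {T : Type} (R : T -> T -> Prop) : Type :=
  {P : T -> Prop | exists x, P = R x}.
Definition qcls {T : Type} (R : T -> T -> Prop) (x : T) : qclass R :=
  exist (fun P => exists y, P = R y) (R x) (ex_intro _ x erefl).
Definition qrep {T : Type} (R : T -> T -> Prop) (q : qclass R) : T :=
  proj1_sig (constructive_indefinite_description _ (proj2_sig q)).

Definition quot_dfa (R : seq S -> seq S -> Prop) (acc : qclass R -> Prop) : DFA :=
  {| dstate := qclass R;
     dinit := qcls R [::];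
     dstep := fun q a => qcls R (qrep q ++ [:: a]);
     dacc := acc |}.

Section Canonical.
Variable L : (nat -> S) -> Prop.

Definition simL (x y : seq S) : Prop :=
  forall w, L (prepend x w) <-> L (prepend y w).

(** "u v^omega in L"; for v = eps we use the convention eps^omega \notin L. *)
Definition inL (u v : seq S) : Prop :=
  match v with
  | [::] => False
  | a :: v' => L (prepend u (opow a v'))
  end.

Definition approx (K : fdfa_kind) (u : seq S) (x y : seq S) : Prop :=
  match K with
  | Periodic => forall v, inL u (x ++ v) <-> inL u (y ++ v)
  | Syntactic => simL (u ++ x) (u ++ y) /\
      forall v, simL (u ++ x ++ v) u -> (inL u (x ++ v) <-> inL u (y ++ v))
  | Recurrent => forall v,
      (simL (u ++ x ++ v) u /\ inL u (x ++ v)) <->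
      (simL (u ++ y ++ v) u /\ inL u (y ++ v))
  end.

Definition accprop (K : fdfa_kind) (u v : seq S) : Prop :=
  match K with
  | Periodic => inL u v
  | _ => simL (u ++ v) u /\ inL u v
  end.

Definition progress_dfa (K : fdfa_kind) (u : seq S) : DFA :=
  quot_dfa (fun q => exists v, q = qcls (approx K u) v /\ accprop K u v).

Definition canonical_fdfa (K : fdfa_kind) : FDFA :=
  {| lead := @quot_dfa simL (fun _ => False);
     prog := fun q => progress_dfa K (qrep q) |}.

End Canonical.
End Words.

(* For the syntactic and recurrent FDFAs the two definitions coincide.  For the
   periodic FDFA the condition M(uv) = M(u) is missing from UP_orig, but it can
   be restored without changing the omega-word: u v^omega = (u v^i) (v^(k+1))^omega
   for all i, k, and since ~_L has finite index (the subset construction of a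
   Buchi automaton for L refines it), the classes of u v^n are eventually
   periodic, giving u v^i ~_L u v^i v^(k+1).  Acceptance in the periodic
   progress automaton of [u'] is u' v^omega in L, which depends only on the
   omega-word. *)

From mathcomp Require Import all_boot.
From mathcomp Require Import zify.
From Stdlib Require Import ClassicalEpsilon RelationClasses FunctionalExtensionality
  PropExtensionality ProofIrrelevance.

Set Implicit Arguments.
Unset Strict Implicit.
Unset Printing Implicit Defensive.

Section OmegaWords.
Variable S : finType.

Lemma prepend_cat (x y : seq S) w : prepend (x ++ y) w = prepend x (prepend y w).
Proof. by elim: x => [|a x IH] //=; rewrite IH. Qed.

Lemma prepend_nth (s : seq S) w n d :
  prepend s w n = if n < size s then nth d s n else w (n - size s).
Proof.
elim: s n => [|a s IH] n /=; first by rewrite subn0.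
by case: n => [|n] //=; rewrite IH ltnS subSS.
Qed.

Lemma opow_subn (a : S) v' n : (size v').+1 <= n ->
  opow a v' (n - (size v').+1) = opow a v' n.
Proof. by move=> le_v_n; rewrite /opow -{2}(subnK le_v_n) modnDr. Qed.

Lemma opow_unfold (a : S) v' : prepend (a :: v') (opow a v') = opow a v'.
Proof.
apply: functional_extensionality => n; rewrite (prepend_nth _ _ _ a).
case: ltnP => [lt_n_v | le_v_n]; first by rewrite /opow modn_small.
exact: opow_subn.
Qed.

Lemma opow_fix (a : S) v' w : w = prepend (a :: v') w -> w = opow a v'.
Proof.
move=> w_fix; apply: functional_extensionality => n.
elim/ltn_ind: n => n IH; rewrite w_fix (prepend_nth _ _ _ a).
case: ltnP => [lt_n_v | le_v_n]; first by rewrite /opow modn_small.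
by rewrite IH ?opow_subn //=; move: le_v_n => /=; lia.
Qed.

Lemma prepend_pow_fix (v : seq S) w k :
  prepend v w = w -> prepend (flatten (nseq k v)) w = w.
Proof. by move=> v_fix; elim: k => [|k IH] //=; rewrite prepend_cat IH. Qed.

Lemma opow_pow (a : S) v' k :
  opow a (v' ++ flatten (nseq k (a :: v'))) = opow a v'.
Proof.
symmetry; apply: opow_fix.
rewrite -[a :: _]/(flatten (nseq k.+1 (a :: v'))).
by rewrite prepend_pow_fix // opow_unfold.
Qed.

Lemma prepend_pow_opow u (a : S) v' i :
  prepend (u ++ flatten (nseq i (a :: v'))) (opow a v') = prepend u (opow a v').
Proof. by rewrite prepend_cat prepend_pow_fix // opow_unfold. Qed.

End OmegaWords.

Section Quotient.
Variables (S : finType) (R : seq S -> seq S -> Prop).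
Hypothesis R_equiv : Equivalence R.

Lemma qcls_eq x y : R x y -> qcls R x = qcls R y.
Proof.
move=> Rxy; have R_ext : R x = R y.
  apply: functional_extensionality => z; apply: propositional_extensionality.
  by split; apply: Equivalence_Transitive; [apply: Equivalence_Symmetric|].
rewrite /qcls; move: (ex_intro _ x _) (ex_intro _ y _).
by move: (R x) R_ext => P -> p q; rewrite (proof_irrelevance _ p q).
Qed.

Lemma qcls_inj x y : qcls R x = qcls R y -> R x y.
Proof. by move=> /(f_equal (@proj1_sig _ _)) /= ->; apply: Equivalence_Reflexive. Qed.

Lemma qrep_qcls x : R x (qrep (qcls R x)).
Proof.
rewrite /qrep; case: constructive_indefinite_description => y /= ->.
exact: Equivalence_Reflexive.
Qed.

Hypothesis R_rcong : forall x y z, R x y -> R (x ++ z) (y ++ z).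

Lemma drun_quot (acc : qclass R -> Prop) w : drun (quot_dfa acc) w = qcls R w.
Proof.
elim/last_ind: w => [|w a IH] //.
rewrite /drun foldl_rcons -/(drun _ w) IH /= -cats1.
by apply/qcls_eq/R_rcong/Equivalence_Symmetric/qrep_qcls.
Qed.

End Quotient.

Section BuchiReach.
Variables (S : finType) (A : NBA S).

Definition accepts_from (q : nba_state A) (w : nat -> S) : Prop :=
  exists r : nat -> nba_state A, r 0 = q /\
    (forall n, nba_trans (r n) (w n) (r n.+1)) /\
    (forall N, exists2 n, N <= n & nba_final (r n)).

Definition nba_post (X : {set nba_state A}) (a : S) : {set nba_state A} :=
  [set q' | [exists q in X, nba_trans q a q']].

Definition nba_reach (X : {set nba_state A}) (x : seq S) := foldl nba_post X x.

Lemma accepts_from_cons q a w :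
  accepts_from q (prepend [:: a] w) <->
  exists2 q', nba_trans q a q' & accepts_from q' w.
Proof.
split=> [[r [<- [r_trans r_final]]] | [q' qq' [r [r0 [r_trans r_final]]]]].
  exists (r 1); first exact: (r_trans 0).
  exists (fun n => r n.+1); do 2!split=> //.
  by move=> N; case: (r_final N.+1) => [[|n]] // ? ?; exists n.
exists (fun n => if n is n'.+1 then r n' else q); split=> //; split.
  by case=> [|n] //=; rewrite r0.
by move=> N; case: (r_final N) => n ? ?; exists n.+1 => //; apply: leqW.
Qed.

Lemma accepts_from_prepend X x w :
  (exists2 q, q \in nba_reach X x & accepts_from q w) <->
  (exists2 q, q \in X & accepts_from q (prepend x w)).
Proof.
elim: x X => [|a x IH] X //; rewrite /nba_reach /= -/(nba_reach _ x) IH.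
split=> [[q' /[!inE] /existsP [q /andP [Xq qq']] acc] |
         [q Xq /accepts_from_cons [q' qq' acc]]].
  by exists q => //; apply/accepts_from_cons; exists q'.
by exists q' => //; rewrite inE; apply/existsP; exists q; rewrite Xq.
Qed.

Lemma nba_acceptsE w :
  nba_accepts A w <-> exists2 q, q \in [set q | nba_init q] & accepts_from q w.
Proof.
split=> [[r [r_init r_acc]] | [q /[!inE] q_init [r [r0 r_acc]]]].
  by exists (r 0); [rewrite inE | exists r].
by exists r; rewrite r0.
Qed.

End BuchiReach.

Lemma simL_finite_index (S : finType) (L : (nat -> S) -> Prop) :
  omega_regular L ->
  exists (T : finType) (f : seq S -> T), forall x y, f x = f y -> simL L x y.
Proof.
move=> [A LA]; exists {set nba_state A}, (nba_reach [set q | nba_init q]).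
move=> x y fxy w; rewrite !LA !nba_acceptsE.
by rewrite -!accepts_from_prepend fxy.
Qed.

Lemma pigeonhole_nat (T : finType) (f : nat -> T) : exists i k, f i = f (i + k.+1).
Proof.
pose g (i : 'I_#|T|.+1) := f i.
have /injectivePn [i [j neq_ij fij]] : ~~ injectiveb g.
  by apply: contraL (leqnn #|T|.+1) => /injectiveP/leq_card; rewrite card_ord ltnNge.
case: (ltngtP i j) neq_ij => [lt_ij | lt_ji | /val_inj ->]; rewrite ?eqxx // => _.
  by exists i, (j - i).-1; rewrite /g in fij; rewrite fij; congr f; lia.
by exists j, (i - j).-1; rewrite /g in fij; rewrite -fij; congr f; lia.
Qed.

Section PeriodicFDFA.
Variables (S : finType) (L : (nat -> S) -> Prop).

Lemma simL_equiv : Equivalence (simL L).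
Proof.
split=> [x w | x y xy w | x y z xy yz w] //; first by rewrite xy.
by rewrite xy yz.
Qed.

Lemma simL_rcong x y z : simL L x y -> simL L (x ++ z) (y ++ z).
Proof. by move=> xy w; rewrite !prepend_cat; apply: xy. Qed.

Lemma inL_simL x y v : simL L x y -> inL L x v <-> inL L y v.
Proof. by move=> xy; case: v => [|a v'] //=; apply: xy. Qed.

Lemma approx_periodic_equiv u : Equivalence (approx L Periodic u).
Proof.
split=> [x v | x y xy v | x y z xy yz v] //; first by rewrite xy.
by rewrite xy yz.
Qed.

Lemma approx_periodic_rcong u x y z :
  approx L Periodic u x y -> approx L Periodic u (x ++ z) (y ++ z).
Proof. by move=> xy v; rewrite -!catA; apply: xy. Qed.

Lemma drun_lead K x : drun (lead (canonical_fdfa L K)) x = qcls (simL L) x.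
Proof. exact: (drun_quot simL_equiv simL_rcong). Qed.

Lemma periodic_progress_accepts u v :
  dlang (@prog _ (canonical_fdfa L Periodic) (drun (lead (canonical_fdfa L Periodic)) u)) v
  <-> inL L u v.
Proof.
rewrite /dlang drun_lead /=.
set x := qrep _; have ux : simL L u x := qrep_qcls simL_equiv u.
rewrite (drun_quot (approx_periodic_equiv x) (@approx_periodic_rcong x)).
rewrite (inL_simL v ux); split=> [[v0 [v0v xv0]] | xv]; last by exists v.
have /(_ [::]) := qcls_inj (approx_periodic_equiv x) v0v.
by rewrite !cats0 => ->.
Qed.

End PeriodicFDFA.

Theorem lemma6 (S : finType) (L : (nat -> S) -> Prop) (K : fdfa_kind) :
  omega_regular L ->
  forall w : nat -> S,
    UP_orig K (canonical_fdfa L K) w <-> UP (canonical_fdfa L K) w.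
Proof.
move=> regL w; case: K => //.
split=> [[u [a [v' [acc_v w_eq]]]] | [u [a [v' [[_ acc_v] w_eq]]]]]; last first.
  by exists u, a, v'.
rewrite periodic_progress_accepts in acc_v.
have [T [f f_simL]] := simL_finite_index regL.
have [i [k fik]] := pigeonhole_nat (fun n => f (u ++ flatten (nseq n (a :: v')))).
exists (u ++ flatten (nseq i (a :: v'))), a, (v' ++ flatten (nseq k (a :: v'))).
split; last by move=> n; rewrite w_eq opow_pow prepend_pow_opow.
split; last by rewrite periodic_progress_accepts /= opow_pow prepend_pow_opow.
rewrite !drun_lead; apply: (qcls_eq (simL_equiv L)); apply: f_simL.
by rewrite fik nseqD flatten_cat catA.
Qed.
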